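(* Let $n$ be a positive integer and $g=3n+1$. The map $\sigma$ sends $\mathcal{G}_{2n}(g,q\le3)$ into $\mathcal{C}_{2n+1}(g+1)$ and is injective on $\mathcal{G}_{2n}(g,q\le 3)$. Moreover: (i) if $G\in\mathcal{G}_{2n}(g)$ has depth $2$ and multiplicity $m$, then $\sigma(G)$ is an $(m+1)$-set of depth $2$; (ii) if $G\in\mathcal{G}_{2n}(g)$ has depth $3$ and multiplicity $m$, then $\sigma(G)$ is an $(m+1)$-set of depth $3$.
   Context: A gapset is a finite set $G\subset\mathbb{N}=\{1,2,\dots\}$ such that whenever $z\in G$ and $z=x+y$ with $x,y\in\mathbb{N}$, then $x\in G$ or $y\in G$; its genus is $\#G$. Write $G=\{\ell_1<\dots<\ell_g\}$. Multiplicity $m(G)=\min\{s\in\mathbb{N}:s\notin G\}$; conductor $c(G)=\min\{s\in\mathbb{N}: s+t\notin G\ \forall t\in\mathbb{N}_0\}$; depth $q(G)=\lceil c(G)/m(G)\rceil$. $G$ is pure $\kappa$-sparse if $\ell_{i+1}-\ell_i\le\kappa$ for all $i$ with equality for some $i$; $\mathcal{G}_\kappa(g)$ is the set of pure $\kappa$-sparse gapsets of genus $g$ and $\mathcal{G}_\kappa(g,q\le3)$ those of depth at most $3$. $\mathcal{C}_\kappa(g)$ is the set of subsets of $[1,2g-1]$ with exactly $g$ elements whose maximum difference between consecutive elements (in increasing order) is exactly $\kappa$. For a positive integer $m$, an $m$-set is a set $M\subset\mathbb{N}$ with $[1,m-1]\subseteq M$ and $M\cap m\mathbb{N}=\emptyset$;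 its depth is $\lceil c/m\rceil$ where $c=\max M$. For $G\in\mathcal{G}_{2n}(g)$ let $\alpha=\max\{i:\ell_{i+1}-\ell_i=2n\}$ and $\sigma(G)=\{1\}\cup\{\ell_i+1:1\le i\le\alpha\}\cup\{\ell_i+2:\alpha+1\le i\le g\}$. *)

From mathcomp Require Import all_boot all_order.
From mathcomp Require Import finmap.
Set Implicit Arguments. Unset Strict Implicit. Unset Printing Implicit Defensive.
Local Open Scope fset_scope.
Local Open Scope nat_scope.

(* Finite subsets of N are modelled as G : {fset nat}; N = {1,2,...}, so
   membership in N is enforced by requiring 0 \notin G where relevant. *)

Definition is_gapset (G : {fset nat}) : Prop :=
  0 \notin G /\
  forall z x y, z \in G -> 0 < x -> 0 < y -> z = x + y -> x \in G \/ y \in G.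

Definition genus (G : {fset nat}) : nat := #|` G|.

(* increasing enumeration, and 1-indexed elements l_1 < ... < l_g *)
Definition elts (G : {fset nat}) : seq nat := sort leq (enum_fset G).
Definition ell (G : {fset nat}) (i : nat) : nat := nth 0 (elts G) i.-1.

Definition fmax (G : {fset nat}) : nat := \max_(x <- enum_fset G) x.

(* multiplicity: least s >= 1 not in G (max G + 1 is never in G) *)
Definition mult (G : {fset nat}) : nat :=
  (find (fun s => s \notin G) (iota 1 (fmax G).+1)).+1.

(* conductor: least s >= 1 with s + t \notin G for all t >= 0,
   i.e. max G + 1 (and 1 for the empty gapset) *)
Definition conductor (G : {fset nat}) : nat := (fmax G).+1.

Definition ceil_div (a b : nat) : nat := (a + b.-1) %/ b.

Definition depth (G : {fset nat}) : nat := ceil_div (conductor G) (mult G).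

Definition pure_sparse (k : nat) (G : {fset nat}) : Prop :=
  (forall i, 1 <= i -> i < genus G -> ell G i.+1 - ell G i <= k) /\
  (exists i, [/\ 1 <= i, i < genus G & ell G i.+1 - ell G i = k]).

Definition inGk (k g : nat) (G : {fset nat}) : Prop :=
  [/\ is_gapset G, genus G = g & pure_sparse k G].

Definition inGk_q3 (k g : nat) (G : {fset nat}) : Prop :=
  inGk k g G /\ depth G <= 3.

Definition inCk (k g : nat) (S : {fset nat}) : Prop :=
  [/\ (forall x, x \in S -> 1 <= x <= (2 * g).-1),
      #|` S| = g &
      \max_(1 <= i < g) (ell S i.+1 - ell S i) = k].

Definition is_mset (m : nat) (M : {fset nat}) : Prop :=
  0 \notin M /\
  (forall x, 1 <= x <= m.-1 -> x \in M) /\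
  (forall x, x \in M -> ~~ (m %| x)).

Definition mset_depth (m : nat) (M : {fset nat}) : nat := ceil_div (fmax M) m.

Definition alpha (k : nat) (G : {fset nat}) : nat :=
  \max_(1 <= i < genus G | ell G i.+1 - ell G i == k) i.

Definition sigma (k : nat) (G : {fset nat}) : {fset nat} :=
  [fset 1] `|` [fset ell G i + 1 | i in iota 1 (alpha k G)]
           `|` [fset ell G i + 2 | i in iota (alpha k G).+1 (genus G - alpha k G)].

From mathcomp Require Import all_boot all_order.
From mathcomp Require Import finmap.
From mathcomp Require Import zify.
Set Implicit Arguments. Unset Strict Implicit. Unset Printing Implicit Defensive.
Local Open Scope fset_scope.
Local Open Scope nat_scope.

(* sigma(G) adds 1 and shifts the gaps l_1 < ... < l_alpha up by one and the
   remaining gaps up by two, so its consecutive differences are those of G except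
   at position alpha, where the last jump 2n becomes 2n+1.  As every gap is
   below 2g, sigma(G) lies in C_{2n+1}(g+1), and alpha, hence G, is recovered
   from sigma(G) as the position of that jump.

   Let m be the multiplicity.  The gaps below m are 1, ..., m-1 and alpha >= m-1,
   so [1, m] is contained in sigma(G).  Depth <= 3 gives max sigma(G) = max G + 2
   < 3(m+1), so only m+1 and 2(m+1) could be multiples of m+1 in sigma(G); they
   would come from the non-gaps m and 2m, from l_i = m-1 with i > alpha
   (impossible as l_i >= i >= m), or from l_i = 2m+1 with i <= alpha (impossible
   as l_alpha <= 2m).  Finally
   max G lies strictly between (q-1)m and qm because m and 2m are not gaps, which
   makes ceil((max G + 2)/(m+1)) = q. *)

Lemma bigmax_seq_mem (s : seq nat) : s != [::] -> \max_(i <- s) i \in s.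
Proof.
elim: s => // x [|y s] IH _; first by rewrite big_seq1 inE.
rewrite big_cons inE /maxn; case: ifP => _; first by rewrite IH ?orbT.
by rewrite eqxx.
Qed.

Lemma sorted_mkseq_ltn (f : nat -> nat) n :
  (forall j, j.+1 < n -> f j < f j.+1) -> sorted ltn (mkseq f n).
Proof.
move=> f_step; apply: (homo_sorted_in (P := [pred j | j < n])) (iota_ltn_sorted 0 n).
  apply: homo_ltn_in => [y x z|i j _|i _]; rewrite ?inE.
  - exact: ltn_trans.
  - by move=> jn l /andP[_ lj]; rewrite inE (ltn_trans lj).
  - exact: f_step.
by apply/allP => j; rewrite mem_iota.
Qed.

Lemma leq_ceil_div a d q : 0 < d -> (ceil_div a d <= q) = (a <= q * d).
Proof. by move=> d0; rewrite /ceil_div -ltnS ltn_divLR // mulSn; apply/idP/idP; lia. Qed.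

Lemma ceil_div_eqS a d q : 0 < d -> (ceil_div a d == q.+1) = (q * d < a <= q.+1 * d).
Proof. by move=> d0; rewrite eqn_leq leq_ceil_div // ltnNge leq_ceil_div // -ltnNge andbC. Qed.

Section SortedEnumeration.
Implicit Types (G S : {fset nat}) (i j x : nat).

Lemma mem_elts G x : (x \in elts G) = (x \in G).
Proof. by rewrite mem_sort. Qed.

Lemma size_elts G : size (elts G) = #|` G|.
Proof. exact: size_sort. Qed.

Lemma sorted_elts G : sorted ltn (elts G).
Proof.
by rewrite ltn_sorted_uniq_leq sort_uniq fset_uniq (sort_sorted leq_total).
Qed.

Lemma elts_sorted_eq S (s : seq nat) : sorted ltn s -> S =i s -> elts S = s.
Proof.
move=> s_sorted eqSs; apply: (irr_sorted_eq ltn_trans ltnn) (sorted_elts S) s_sorted _.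
by move=> x; rewrite mem_elts eqSs.
Qed.

Lemma ell_mem G i : 0 < i <= #|` G| -> ell G i \in G.
Proof. by case/andP=> i0 iG; rewrite -mem_elts mem_nth // size_elts prednK. Qed.

Lemma ellP G x : x \in G -> exists2 i, 0 < i <= #|` G| & ell G i = x.
Proof.
rewrite -mem_elts => xG; exists (index x (elts G)).+1; last exact: nth_index.
by rewrite ltnS -size_elts index_mem.
Qed.

Lemma ltn_ell G i j : 0 < i -> i < j <= #|` G| -> ell G i < ell G j.
Proof.
move=> i0 /andP[ij jG]; apply: (sorted_ltn_nth ltn_trans 0 (sorted_elts G));
  rewrite ?inE ?size_elts; lia.
Qed.

Lemma leq_ell G i j : 0 < i -> i <= j <= #|` G| -> ell G i <= ell G j.
Proof.
move=> i0 /andP[]; rewrite leq_eqVlt => /predU1P[-> //|ij] jG.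
by rewrite ltnW // ltn_ell ?ij.
Qed.

Lemma ell_ge G i : 0 \notin G -> 0 < i <= #|` G| -> i <= ell G i.
Proof.
move=> G0; elim: i => // [[|i]] IH /andP[_ iG].
  by rewrite lt0n; apply: contraNneq G0 => <-; rewrite ell_mem.
apply: leq_ltn_trans (IH _) (ltn_ell _ _) => //; lia.
Qed.

Lemma fset_ell_eq G1 G2 : #|` G1| = #|` G2| ->
  (forall i, 0 < i <= #|` G1| -> ell G1 i = ell G2 i) -> G1 = G2.
Proof.
move=> eqG eqell; suff e : elts G1 = elts G2 by apply/fsetP => x; rewrite -!mem_elts e.
apply: (@eq_from_nth _ 0) => [|i]; rewrite !size_elts // => iG.
exact: (eqell i.+1).
Qed.

Lemma leq_fmax G x : x \in G -> x <= fmax G.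
Proof. by move=> xG; apply: (leq_bigmax_seq x). Qed.

Lemma fmax_ell G : fmax G = ell G #|` G|.
Proof.
have [->|G_ne0] := eqVneq G fset0; first by rewrite /fmax /ell /elts /= big_nil.
have G_gt0 : 0 < #|` G| by rewrite cardfs_gt0.
have /ellP[i iG ei] : fmax G \in G by apply: bigmax_seq_mem; rewrite -size_eq0 -lt0n.
apply/eqP; rewrite eqn_leq leq_fmax ?andbT; last by rewrite ell_mem // G_gt0 leqnn.
by rewrite -ei; apply: leq_ell; lia.
Qed.

End SortedEnumeration.

Lemma mult_notin G : mult G \notin G.
Proof.
rewrite /mult; set notinG := fun s => s \notin G.
have hasN : has notinG (iota 1 (fmax G).+1).
  apply/hasP; exists (fmax G).+1; first by rewrite mem_iota; lia.
  by apply/negP => /leq_fmax; rewrite ltnn.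
have := nth_find 0 hasN; rewrite nth_iota ?add1n //.
by move: hasN; rewrite has_find size_iota.
Qed.

Lemma mult_in G y : 0 < y < mult G -> y \in G.
Proof.
rewrite /mult => /andP[y0 ym].
have ltyF : y.-1 < find (fun s => s \notin G) (iota 1 (fmax G).+1) by lia.
have yF : y.-1 < (fmax G).+1.
  by rewrite -(size_iota 1 (fmax G).+1) (leq_trans ltyF) ?find_size.
by have := before_find 0 ltyF; rewrite nth_iota // add1n prednK // => /negbFE.
Qed.

Lemma mult_gt0 G : 0 < mult G.
Proof. by []. Qed.

Lemma mult_le_genus G : (mult G).-1 <= #|` G|.
Proof.
rewrite -(size_iota 1 (mult G).-1); apply: (uniq_leq_size (iota_uniq _ _)) => y.
by rewrite mem_iota => ym; apply: mult_in; have := mult_gt0 G; lia.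
Qed.

Section Gapsets.
Variable G : {fset nat}.
Hypothesis gapG : is_gapset G.

Lemma gapset_pos x : x \in G -> 0 < x.
Proof. by rewrite lt0n; apply: contraTneq => ->; case: gapG. Qed.

Lemma gapset_split z x : z \in G -> 0 < x < z -> x \in G \/ z - x \in G.
Proof. by move=> zG /andP[x0 xz]; apply: gapG.2 zG x0 _ _; lia. Qed.

Lemma gapset_one x : x \in G -> 1 \in G.
Proof.
move=> xG; have := gapset_pos xG; case: x xG => // x; elim: x => // x IH xG _.
by case: (gapset_split xG (_ : 0 < 1 < x.+2)) => // ?; apply: IH; rewrite -?subn1.
Qed.

Lemma count_gapset_pairs v : v \in G -> v.-1 <= 2 * count (mem G) (index_iota 1 v).
Proof.
move=> vG; set r := index_iota 1 v.
have mirror : count (mem G) r = count (fun i => v - i \in G) r.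
  by rewrite -!sum1_count big_nat_rev; apply: congr_big_nat.
have all_pairs : count (predU (mem G) (fun i => v - i \in G)) r = size r.
  apply/eqP; rewrite -all_count; apply/allP => i; rewrite mem_index_iota => ir.
  by apply/orP; apply: gapset_split.
have := count_predUI (mem G) (fun i => v - i \in G) r.
by rewrite all_pairs -mirror /r size_iota; lia.
Qed.

Lemma gapset_lt_double_genus v : v \in G -> v < 2 * #|` G|.
Proof.
move=> vG; have v0 := gapset_pos vG; have := count_gapset_pairs vG.
suff : count (mem G) (index_iota 1 v) < #|` G| by lia.
rewrite -size_filter; apply: (@uniq_leq_size _ (v :: _) G).
  by rewrite /= filter_uniq ?iota_uniq // mem_filter mem_index_iota ltnn !andbF.
by move=> x; rewrite inE mem_filter => /predU1P[->|/andP[]].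
Qed.

Lemma double_mult_notin : 2 * mult G \notin G.
Proof.
apply/negP => mmG; have := gapset_split mmG (_ : 0 < mult G < 2 * mult G).
rewrite mul2n -addnn addnK (negPf (mult_notin G)) => /(_ _)[] //.
by have := mult_gt0 G; lia.
Qed.

Lemma ell_prefix i : 0 < i < mult G -> ell G i = i.
Proof.
elim: i => // i IH /andP[_ im].
have iG : i.+1 \in G by apply: mult_in; lia.
have [j /andP[j0 jG] ej] := ellP iG.
case: (ltngtP j i.+1) => [ji|ij|ji]; last by rewrite -ji in ej *.
  have ji_le : j <= i <= #|` G| by have := mult_le_genus G; lia.
  by have := leq_ell j0 ji_le; rewrite ej IH; lia.
have ij_lt : i.+1 < j <= #|` G| by lia.
have := ltn_ell (isT : 0 < i.+1) ij_lt.
have := ell_ge gapG.1 (_ : 0 < i.+1 <= #|` G|); rewrite ej; lia.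
Qed.

Lemma ell1 : 0 < #|` G| -> ell G 1 = 1.
Proof.
move=> G_gt0; have oneG : 1 \in G by apply: (@gapset_one (ell G 1)); rewrite ell_mem ?G_gt0.
have m_neq1 : mult G != 1 by apply: contraNneq (mult_notin G) => ->.
by apply: ell_prefix; have := mult_gt0 G; lia.
Qed.

End Gapsets.

Lemma alpha_le k G : alpha k G <= #|` G|.
Proof. by apply/bigmax_leqP_seq => i; rewrite mem_index_iota => /andP[_ /ltnW]. Qed.

Lemma alpha_spec k G : pure_sparse k G ->
  [/\ 0 < alpha k G, alpha k G < #|` G| & ell G (alpha k G).+1 - ell G (alpha k G) = k].
Proof.
case=> _ [i [i0 iG ik]]; set P := fun j => ell G j.+1 - ell G j == k.
have : alpha k G \in filter P (index_iota 1 (genus G)).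
  rewrite /alpha -big_filter; apply: bigmax_seq_mem; apply/eqP/eqP; rewrite -has_filter.
  by apply/hasP; exists i; rewrite ?mem_index_iota ?i0 /P ?ik.
by rewrite mem_filter mem_index_iota => /andP[/eqP ? /andP[]].
Qed.

Lemma mult_le_alpha k G : is_gapset G -> pure_sparse k G -> 1 < k -> mult G <= (alpha k G).+1.
Proof.
move=> gapG /alpha_spec[a0 aG aE] k1; rewrite leqNgt; apply/negP => am.
by move: aE; rewrite !ell_prefix //; lia.
Qed.

Definition sigma_elt k G j :=
  if j is 0 then 1 else ell G j + (if j <= alpha k G then 1 else 2).

Lemma sigma_elt0 k G : sigma_elt k G 0 = 1.
Proof. by []. Qed.

Lemma sigma_eltS k G j :
  sigma_elt k G j.+1 = ell G j.+1 + (if j < alpha k G then 1 else 2).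
Proof. by []. Qed.

Lemma mem_sigma k G x : (x \in sigma k G) = (x \in mkseq (sigma_elt k G) (#|` G|).+1).
Proof.
have memE f (s : seq nat) : (x \in [fset f i | i in s]) = (x \in map f s).
  by apply/imfsetP/mapP => -[i si ->]; exists i.
set a := alpha k G.
have lowE : map (fun i => ell G i + 1) (iota 1 a) = map (sigma_elt k G) (iota 1 a).
  by apply/eq_in_map => -[|i]; rewrite mem_iota // /sigma_elt; case: ifP; lia.
have highE : map (fun i => ell G i + 2) (iota a.+1 (#|` G| - a)) =
             map (sigma_elt k G) (iota a.+1 (#|` G| - a)).
  by apply/eq_in_map => -[|i]; rewrite mem_iota // /sigma_elt; case: ifP; lia.
rewrite /mkseq -add1n iotaD map_cat -(subnKC (alpha_le k G)) iotaD map_cat add1n.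
by rewrite /sigma /genus !inE !memE mem_cat add0n -lowE -highE orbA.
Qed.

Section Sigma.
Variables (k : nat) (G : {fset nat}).
Hypothesis gapG : is_gapset G.

Lemma elts_sigma : elts (sigma k G) = mkseq (sigma_elt k G) (#|` G|).+1.
Proof.
apply: elts_sorted_eq; last exact: mem_sigma.
apply: sorted_mkseq_ltn => -[|j] jG /=.
  by have := ell_ge gapG.1 (_ : 0 < 1 <= #|` G|); case: ifP; lia.
have := @ltn_ell G j.+1 j.+2 isT (_ : j.+1 < j.+2 <= #|` G|).
by do 2 case: ifP; lia.
Qed.

Lemma card_sigma : #|` sigma k G| = (#|` G|).+1.
Proof. by rewrite -size_elts elts_sigma size_mkseq. Qed.

Lemma ell_sigma j : j <= #|` G| -> ell (sigma k G) j.+1 = sigma_elt k G j.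
Proof. by move=> jG; rewrite /ell elts_sigma nth_mkseq. Qed.

Lemma sigma_elt_mem j : j <= #|` G| -> sigma_elt k G j \in sigma k G.
Proof. by move=> jG; rewrite mem_sigma; apply: map_f; rewrite mem_iota. Qed.

Lemma mem_sigma_elt x : x \in sigma k G -> exists2 j, j <= #|` G| & x = sigma_elt k G j.
Proof. by rewrite mem_sigma => /mapP[j]; rewrite mem_iota => jG ->; exists j. Qed.

Lemma sigma_elt_bounds j : j <= #|` G| -> 0 < sigma_elt k G j < 2 * #|` G| + 2.
Proof.
case: j => [|j] jG; rewrite ?sigma_elt0 ?sigma_eltS; first lia.
have jGmem := ell_mem (_ : 0 < j.+1 <= #|` G|).
have := gapset_pos gapG (jGmem jG); have := gapset_lt_double_genus gapG (jGmem jG).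
by case: ifP; lia.
Qed.

Hypothesis sparseG : pure_sparse k G.

Lemma fmax_sigma : fmax (sigma k G) = fmax G + 2.
Proof.
have [_ aG _] := alpha_spec sparseG; rewrite !fmax_ell card_sigma ell_sigma //.
by case: #|` G| aG => // g aG; rewrite /= leqNgt aG.
Qed.

Lemma sigma_elt_jump : sigma_elt k G (alpha k G).+1 - sigma_elt k G (alpha k G) = k.+1.
Proof.
have [a0 aG aE] := alpha_spec sparseG.
have := ltn_ell a0 (_ : alpha k G < (alpha k G).+1 <= #|` G|).
have -> : sigma_elt k G (alpha k G) = ell G (alpha k G) + 1.
  by rewrite -[in LHS](prednK a0) sigma_eltS prednK // leqnn.
rewrite sigma_eltS ltnn; lia.
Qed.

Lemma sigma_elt_step j : 0 < k -> j < #|` G| -> j != alpha k G ->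
  sigma_elt k G j.+1 - sigma_elt k G j <= k.
Proof.
have [a0 _ _] := alpha_spec sparseG; case: j => [|j] k0 jG ja; rewrite !sigma_eltS.
  by rewrite a0 ell1 //; lia.
have := sparseG.1 j.+1 isT jG; do 2 case: ifP; lia.
Qed.

Lemma sigma_jump_alpha j : 0 < k -> j < #|` G| ->
  sigma_elt k G j.+1 - sigma_elt k G j = k.+1 -> j = alpha k G.
Proof.
move=> k0 jG jump; have [//|ja] := eqVneq j (alpha k G).
by have := sigma_elt_step k0 jG ja; rewrite jump ltnn.
Qed.

Lemma sigma_inCk : 0 < k -> inCk k.+1 (#|` G|).+1 (sigma k G).
Proof.
move=> k0; split; [|exact: card_sigma|].
  by move=> x /mem_sigma_elt[j /sigma_elt_bounds jG ->]; lia.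
have [_ aG _] := alpha_spec sparseG.
have gapE i : 0 < i <= #|` G| ->
    ell (sigma k G) i.+1 - ell (sigma k G) i = sigma_elt k G i - sigma_elt k G i.-1.
  by move=> /andP[i0 iG]; rewrite -(prednK i0) !ell_sigma ?prednK //; lia.
apply/eqP; rewrite eqn_leq; apply/andP; split.
  apply/bigmax_leqP_seq => i; rewrite mem_index_iota => iG _.
  rewrite gapE; last lia.
  case: (i =P (alpha k G).+1) => [->|ia]; first by rewrite sigma_elt_jump.
  have i0 : 0 < i by lia.
  have := @sigma_elt_step i.-1 k0; rewrite prednK // => step.
  by apply/leqW/step; lia.
have := leq_bigmax_seq (P := xpredT) (F := fun i => ell (sigma k G) i.+1 - ell (sigma k G) i)
  (alpha k G).+1 (_ : _ \in index_iota 1 (#|` G|).+1) isT.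
by rewrite gapE ?sigma_elt_jump ?mem_index_iota; [apply; lia | lia].
Qed.

Lemma mset_depth_sigma q : 0 < q < 3 -> depth G = q.+1 ->
  mset_depth (mult G).+1 (sigma k G) = q.+1.
Proof.
move=> q12 /eqP; rewrite /depth /conductor /mset_depth fmax_sigma // ceil_div_eqS //.
move=> /andP[lo hi]; apply/eqP; rewrite ceil_div_eqS //.
have [_ aG _] := alpha_spec sparseG.
have FG : fmax G \in G by rewrite fmax_ell ell_mem //; lia.
have neq_m : fmax G != mult G by apply: contraNneq (mult_notin G) => <-.
have neq_2m : fmax G != 2 * mult G by apply: contraNneq (double_mult_notin gapG) => <-.
have [] : q = 1 \/ q = 2 by lia.
all: by move=> q_eq; rewrite q_eq in lo hi *; lia.
Qed.

End Sigma.

Lemma sigma_inj k G1 G2 : is_gapset G1 -> is_gapset G2 ->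
  pure_sparse k G1 -> pure_sparse k G2 -> 0 < k ->
  #|` G1| = #|` G2| -> sigma k G1 = sigma k G2 -> G1 = G2.
Proof.
move=> gap1 gap2 sparse1 sparse2 k0 eqg eqs.
have eqelt j : j <= #|` G1| -> sigma_elt k G1 j = sigma_elt k G2 j.
  by move=> jG; rewrite -!ell_sigma -?eqg ?eqs.
have [_ aG _] := alpha_spec sparse1.
have eqa : alpha k G1 = alpha k G2.
  apply: sigma_jump_alpha; rewrite -?eqg //.
  by rewrite -!eqelt ?sigma_elt_jump //; lia.
apply: fset_ell_eq eqg _ => -[|i] // /andP[_ iG]; move: (eqelt _ iG).
by rewrite /sigma_elt eqa; case: ifP => _ /eqP; rewrite eqn_add2r => /eqP.
Qed.

Section SigmaMset.
Variables (n : nat) (G : {fset nat}).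
Hypotheses (gapG : is_gapset G) (sparseG : pure_sparse (2 * n) G).
Hypotheses (n_gt0 : 0 < n) (genusG : #|` G| = 3 * n + 1).

(* Otherwise l_(alpha+1) = l_alpha + 2n < 3m forces m > 2n, and then
   l_(alpha+1) > 2m + 2n >= 6n + 2 = 2g. *)
Lemma ell_alpha_le_double_mult : fmax G < 3 * mult G -> ell G (alpha (2 * n) G) <= 2 * mult G.
Proof.
move=> Fm; have [a0 aG aE] := alpha_spec sparseG; rewrite leqNgt; apply/negP => big.
have aG' : 0 < (alpha (2 * n) G).+1 <= #|` G| by lia.
have := ltn_ell a0 (_ : alpha (2 * n) G < (alpha (2 * n) G).+1 <= #|` G|).
have := gapset_lt_double_genus gapG (ell_mem aG'); have := leq_fmax (ell_mem aG'); lia.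
Qed.

Lemma sigma_mset : depth G <= 3 -> is_mset (mult G).+1 (sigma (2 * n) G).
Proof.
rewrite /depth /conductor leq_ceil_div // => Fm; have [a0 aG aE] := alpha_spec sparseG.
have am : mult G <= (alpha (2 * n) G).+1 by apply: mult_le_alpha => //; lia.
have ua := ell_alpha_le_double_mult Fm.
have m_le_g := mult_le_genus G; have m0 := mult_gt0 G.
split; [|split].
- by apply/negP => /mem_sigma_elt[j /(sigma_elt_bounds (2 * n) gapG)]; lia.
- move=> [|[|x]] // /andP[_ xm].
    by rewrite -(sigma_elt0 (2 * n) G) sigma_elt_mem.
  have <- : sigma_elt (2 * n) G x.+1 = x.+2.
    by rewrite sigma_eltS ell_prefix //; case: ifP; lia.
  by apply: sigma_elt_mem; lia.
move=> x xS; have xF : x <= fmax G + 2 by rewrite -(fmax_sigma gapG sparseG) leq_fmax.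
have [[|i] iG xE] := mem_sigma_elt xS.
  by rewrite xE sigma_elt0 dvdn1 eqSS -lt0n.
apply/negP => /dvdnP[t xt].
have iG' : 0 < i.+1 <= #|` G| by lia.
have neq_m : ell G i.+1 != mult G by apply: contraNneq (mult_notin G) => <-; apply: ell_mem.
have neq_2m : ell G i.+1 != 2 * mult G.
  by apply: contraNneq (double_mult_notin gapG) => <-; apply: ell_mem.
have i_le := ell_ge gapG.1 iG'.
have ia : i < alpha (2 * n) G -> ell G i.+1 <= ell G (alpha (2 * n) G).
  by move=> ia; apply: leq_ell; lia.
rewrite xE sigma_eltS in xt xF; case: ifP => ia_b in xt xF.
all: case: t xt => [|[|[|t]]] xt; rewrite ?mulSn in xt; lia.
Qed.

Lemma sigma_mset_depth q : 0 < q < 3 -> depth G = q.+1 ->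
  is_mset (mult G).+1 (sigma (2 * n) G) /\ mset_depth (mult G).+1 (sigma (2 * n) G) = q.+1.
Proof.
move=> q12 dG; split; last exact: mset_depth_sigma.
by apply: sigma_mset; rewrite dG; lia.
Qed.

End SigmaMset.

Theorem mainTheorem3 (n : nat) : 0 < n ->
  let g := 3 * n + 1 in
  (forall G, inGk_q3 (2 * n) g G -> inCk (2 * n + 1) (g + 1) (sigma (2 * n) G)) /\
  (forall G1 G2, inGk_q3 (2 * n) g G1 -> inGk_q3 (2 * n) g G2 ->
     sigma (2 * n) G1 = sigma (2 * n) G2 -> G1 = G2) /\
  (forall G, inGk (2 * n) g G -> depth G = 2 ->
     is_mset (mult G + 1) (sigma (2 * n) G) /\
     mset_depth (mult G + 1) (sigma (2 * n) G) = 2) /\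
  (forall G, inGk (2 * n) g G -> depth G = 3 ->
     is_mset (mult G + 1) (sigma (2 * n) G) /\
     mset_depth (mult G + 1) (sigma (2 * n) G) = 3).
Proof.
move=> n_gt0 g; split; [|split; [|split]].
- move=> G [[gapG genusG sparseG] _]; rewrite /genus in genusG.
  by rewrite -genusG !addn1; apply: sigma_inCk => //; lia.
- move=> G1 G2 [[gap1 genus1 sparse1] _] [[gap2 genus2 sparse2] _].
  by apply: sigma_inj => //; rewrite /genus in genus1 genus2; rewrite ?genus1 ?genus2 //; lia.
- move=> G [gapG genusG sparseG] dG; rewrite addn1.
  exact: (sigma_mset_depth gapG sparseG n_gt0 genusG).
- move=> G [gapG genusG sparseG] dG; rewrite addn1.
  exact: (sigma_mset_depth gapG sparseG n_gt0 genusG).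
Qed.
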